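(* Let $n$ be odd and let $S$ be a semiregular subgroup of $G^*$. Then there exists $\varphi\in G^*\setminus G$ of order $2$ such that $\varphi s=s\varphi$ for every $s\in S$.
   Context: Fix $n\ge 2$, $W=\{1,\dots,n\}$, $M=\{n+1,\dots,2n\}$, $I=W\cup M$. $G^*=\{\varphi\in\mathrm{Sym}(I):\{\varphi(W),\varphi(M)\}=\{W,M\}\}$ and $G=\{\varphi\in\mathrm{Sym}(I):\varphi(W)=W,\ \varphi(M)=M\}$. A subgroup $S\le\mathrm{Sym}(I)$ is semiregular if for every $z\in I$ the only element $s\in S$ with $s(z)=z$ is the identity. *)

From mathcomp Require Import all_boot all_order all_fingroup.
Set Implicit Arguments. Unset Strict Implicit. Unset Printing Implicit Defensive.
Local Open Scope group_scope.

(* I = {1,...,2n} is modelled by 'I_(n + n), element i standing for i+1.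
   W = {1..n} ~ {i | i < n},  M = {n+1..2n} ~ {i | n <= i}. *)
Definition Wset (n : nat) : {set 'I_(n + n)} := [set i : 'I_(n + n) | i < n]%N.
Definition Mset (n : nat) : {set 'I_(n + n)} := [set i : 'I_(n + n) | n <= i]%N.

Definition Gstar (n : nat) : {set {perm 'I_(n + n)}} :=
  [set phi : {perm 'I_(n + n)} |
     [set phi @: Wset n; phi @: Mset n] == [set Wset n; Mset n]].

Definition Gfix (n : nat) : {set {perm 'I_(n + n)}} :=
  [set phi : {perm 'I_(n + n)} |
     (phi @: Wset n == Wset n) && (phi @: Mset n == Mset n)].

Definition semiregular (n : nat) (S : {group {perm 'I_(n + n)}}) : Prop :=
  forall (z : 'I_(n + n)) (s : {perm 'I_(n + n)}), s \in S -> s z = z -> s = 1.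

From mathcomp Require Import all_boot all_order all_fingroup.
From mathcomp Require Import cyclic pgroup sylow.
Set Implicit Arguments. Unset Strict Implicit. Unset Printing Implicit Defensive.
Local Open Scope group_scope.

(* By semiregularity every S-orbit has #|S| points, and an S-equivariant
   involution can be defined orbit by orbit: s a <-> s b pairs the orbits of
   a and b, and s a <-> s g a, for an involution g of S, pairs the orbit of a
   with itself.  If S stabilises W, every
   orbit lies in W or in M, and since #|W| = #|M| the orbits in W can be
   matched with those in M.  Otherwise some t in S exchanges W and M.  As n is
   odd, the stabiliser of W in S has odd order: an involution in it would
   generate a 2-group fixing #|W| = 1 (mod 2) points of W.  Hence q = #[t^2]
   is odd and g = t^q is an involution of S exchanging W and M. *)

Lemma cards_setDI (T : finType) (A B C : {set T}) :
  B \subset A -> #|(A :\: B) :&: C| = #|A :&: C| - #|B :&: C|.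
Proof. by move=> sBA; rewrite setIDAC cardsD setIAC (setIidPr sBA). Qed.

Section SwapsSides.

Variable T : finType.

Definition swaps_sides (s : {perm T}) (A : {set T}) :=
  forall x, (s x \in A) = (x \notin A).

Definition opposite_sides (A : {set T}) : rel T :=
  [rel x y | (x \in A) != (y \in A)].

Lemma opposite_sides_sym A : symmetric (opposite_sides A).
Proof. by move=> x y; rewrite /opposite_sides /= eq_sym. Qed.

Lemma opposite_sidesP (s : {perm T}) A :
  (forall x, opposite_sides A x (s x)) <-> swaps_sides s A.
Proof.
split=> sA x; move: (sA x); rewrite /opposite_sides /=;
  by case: (_ \in A); case: (_ \in A).
Qed.

Lemma mem_expg_swaps (s : {perm T}) A k x :
  swaps_sides s A -> ((s ^+ k) x \in A) = odd k (+) (x \in A).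
Proof.
move=> sA; elim: k x => [|k IHk] x; first by rewrite expg0 perm1.
by rewrite expgS permM IHk sA /= addbN addNb.
Qed.

Lemma imset_swaps (s : {perm T}) A : swaps_sides s A -> s @: A = ~: A.
Proof.
move=> sA; apply/setP => y; rewrite -{1}(permKV s y) mem_imset; last exact: perm_inj.
by rewrite inE -{2}(permKV s y) sA negbK.
Qed.

Lemma order_swaps_sides (s : {perm T}) A (x : T) :
  s * s = 1 -> swaps_sides s A -> #[s] = 2.
Proof.
move=> ss1 sA; apply: nt_prime_order => //; apply/eqP => s1.
by move: (sA x); rewrite s1 perm1; case: (_ \in A).
Qed.

End SwapsSides.

Section Semiregular.

Variables (T : finType) (S : {group {perm T}}).
Hypothesis semiregS : forall x s, s \in S -> s x = x -> s = 1.

Lemma semiregular_act_inj (x : T) :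
  {in S &, forall s t : {perm T}, s x = t x -> s = t}.
Proof.
move=> s t Ss St stx; apply/eqP; rewrite eq_mulgV1; apply/eqP.
by apply: (semiregS (x := x)); rewrite ?groupM ?groupV // permM stx permK.
Qed.

Lemma card_orbit_semiregular x : #|orbit 'P S x| = #|S|.
Proof. exact: card_in_imset (@semiregular_act_inj x). Qed.

Lemma odd_setstab_semiregular (A : {set T}) : odd #|A| -> odd #|'N_S(A | 'P)|.
Proof.
move=> oddA; rewrite -[odd _]negbK -dvdn2.
apply/negP => /(Cauchy (isT : prime 2)) [s /setIP [Ss NAs] os].
have p2s : 2.-group <[s]> by rewrite /pgroup -orderE os pnat_id.
have actA : [acts <[s]>, on A | 'P] by rewrite cycle_subG.
have /set0Pn [x /setIP [_ /afixP fixx]] : 'Fix_(A | 'P)(<[s]>) != set0.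
  apply/negP => /eqP fix0; move: (pgroup_fix_mod p2s actA).
  by rewrite fix0 cards0 modn2 oddA.
by move: os; rewrite (semiregS Ss (fixx s (cycle_id s))) order1.
Qed.

Lemma semiregular_swaps_involution (A : {set T}) t :
  odd #|A| -> t \in S -> swaps_sides t A ->
  exists2 g, g \in S & g * g = 1 /\ swaps_sides g A.
Proof.
move=> oddA St tA.
have t2N : t ^+ 2 \in 'N_S(A | 'P).
  by rewrite inE groupX //; apply/astabsP => x; rewrite /= mem_expg_swaps.
have oddq : odd #[t ^+ 2].
  exact: dvdn_odd (order_dvdG t2N) (odd_setstab_semiregular oddA).
exists (t ^+ #[t ^+ 2]); first exact: groupX.
split; first by rewrite -expgD addnn -mul2n expgM expg_order.
by move=> x; rewrite mem_expg_swaps // oddq.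
Qed.

(* For x in the orbit of a, the unique element of S mapping a to x; the
   default 1 is a junk value for x outside that orbit. *)
Definition transporter (a x : T) : {perm T} := odflt 1 [pick s in S | s a == x].

Lemma transporter_act a s : s \in S -> transporter a (s a) = s.
Proof.
move=> Ss; rewrite /transporter; case: pickP => [t /andP [St /eqP tas] | /(_ s)].
  exact: semiregular_act_inj tas.
by rewrite Ss eqxx.
Qed.

Definition orbit_swap (a b x : T) : T :=
  if x \in orbit 'P S a then transporter a x b else transporter b x a.

Lemma orbit_swap_act a b s : s \in S -> orbit_swap a b (s a) = s b.
Proof. by move=> Ss; rewrite /orbit_swap (mem_orbit 'P a Ss) transporter_act. Qed.

Lemma orbit_swap_act_disjoint a b s :
  [disjoint orbit 'P S a & orbit 'P S b] -> s \in S -> orbit_swap a b (s b) = s a.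
Proof.
move=> dis Ss.
by rewrite /orbit_swap (disjointFl dis (mem_orbit _ _ Ss)) transporter_act.
Qed.

Lemma orbit_swap_act_involution a g s :
  g \in S -> g * g = 1 -> s \in S -> orbit_swap a (g a) (s (g a)) = s a.
Proof.
move=> Sg gg1 Ss; have -> : s (g a) = (g * s) a by rewrite permM.
by rewrite orbit_swap_act ?groupM // permM -[g (g a)]permM gg1 perm1.
Qed.

Lemma acts_perm_setT : [acts S, on [set: T] | 'P].
Proof. by apply/actsP => s _ x; rewrite !inE. Qed.

Section Pairing.

Variable Q : rel T.
Hypothesis Q_sym : symmetric Q.
Hypothesis Q_act : {in S, forall s : {perm T}, {homo s : x y / Q x y}}.

Definition equivariant_pairing (A : {set T}) (phi : T -> T) :=
  {in A, forall x, [/\ phi x \in A, phi (phi x) = x, Q x (phi x)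
                     & {in S, forall s : {perm T}, phi (s x) = s (phi x)}]}.

Lemma equivariant_pairing_glue (A B : {set T}) (phiB phiR : T -> T) :
  [acts S, on B | 'P] -> B \subset A ->
  equivariant_pairing B phiB -> equivariant_pairing (A :\: B) phiR ->
  equivariant_pairing A (fun x => if x \in B then phiB x else phiR x).
Proof.
move=> /actsP actB sBA pairB pairR x Ax.
have actBx s : s \in S -> (s x \in B) = (x \in B) by move=> Ss; apply: actB.
have [xB | xNB] := boolP (x \in B).
  have [Bphi phiK Qx phiS] := pairB x xB.
  rewrite Bphi phiK (subsetP sBA) //; split=> // s Ss.
  by rewrite actBx ?xB ?phiS.
have xAB : x \in A :\: B by rewrite inE xNB.
have [/setDP [Aphi NBphi] phiK Qx phiS] := pairR x xAB.
rewrite (negbTE NBphi) phiK Aphi; split=> // s Ss.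
by rewrite actBx // (negbTE xNB) phiS.
Qed.

Lemma equivariant_pairing_peel (P : {set T} -> Prop) :
  (forall A, [acts S, on A | 'P] -> P A -> A != set0 ->
     exists2 B : {set T},
       [/\ B \subset A, B != set0, [acts S, on B | 'P] & P (A :\: B)]
     & exists phi, equivariant_pairing B phi) ->
  forall A, [acts S, on A | 'P] -> P A -> exists phi, equivariant_pairing A phi.
Proof.
move=> step A; elim: {A}_.+1 {-2}A (ltnSn #|A|) => // m IHm A leAm actA PA.
have [-> | A0] := eqVneq A set0; first by exists id => x; rewrite inE.
have [B [sBA B0 actB PAB] [phiB pairB]] := step A actA PA A0.
have ltABm : #|A :\: B| < m.
  rewrite -ltnS; apply: leq_trans _ leAm.
  by rewrite ltnS cardsDS // ltn_subrL !card_gt0 B0 A0.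
have [phiR pairR] := IHm (A :\: B) ltABm (actsD actA actB) PAB.
exists (fun x => if x \in B then phiB x else phiR x).
exact: equivariant_pairing_glue.
Qed.

Lemma orbit_pairing c d (phi : T -> T) :
  Q c d -> {in S, forall s : {perm T}, phi (s c) = s d /\ phi (s d) = s c} ->
  equivariant_pairing (orbit 'P S c :|: orbit 'P S d) phi.
Proof.
move=> Qcd phiS x.
wlog /orbitP [s Ss <-] : c d Qcd phiS / x \in orbit 'P S c.
  move=> oc cdx; case/setUP: (cdx) => [cx | dx]; first exact: oc cx cdx.
  rewrite setUC; apply: oc dx _ => //; first by rewrite Q_sym.
    by move=> s /phiS [].
  by rewrite setUC.
move=> _; have [/= -> ->] := phiS s Ss; split=> //.
- by apply/setUP; right; apply: mem_orbit.
- exact: Q_act.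
- by move=> u Su /=; rewrite -!permM; have [-> _] := phiS _ (groupM Ss Su).
Qed.

Lemma involution_pairing g :
  g \in S -> g * g = 1 -> (forall x, Q x (g x)) ->
  exists phi, equivariant_pairing [set: T] phi.
Proof.
move=> Sg gg1 Qg.
apply: (equivariant_pairing_peel (P := fun _ => True)) acts_perm_setT _ => //.
move=> A actA _ /set0Pn [a Aa].
exists (orbit 'P S a :|: orbit 'P S (g a)).
  split=> //.
  - by rewrite subUset !acts_sub_orbit // Aa (actsP actA g Sg a).
  - by apply/set0Pn; exists a; rewrite inE orbit_refl.
  - by rewrite actsU ?acts_orbit ?subsetT.
exists (orbit_swap a (g a)); apply: orbit_pairing => // s Ss.
by rewrite orbit_swap_act // orbit_swap_act_involution.
Qed.

Lemma balanced_pairing (C : {set T}) :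
  [acts S, on C | 'P] -> #|C| = #|~: C| -> {in C & ~: C, forall x y, Q x y} ->
  exists phi, equivariant_pairing [set: T] phi.
Proof.
move=> actC balC QC.
have actCC : [acts S, on ~: C | 'P].
  by apply/actsP => s Ss x; rewrite !inE (actsP actC).
pose balanced (A : {set T}) := #|A :&: C| = #|A :&: ~: C|.
apply: (equivariant_pairing_peel (P := balanced)) acts_perm_setT _; last first.
  by rewrite /balanced !setTI.
move=> A actA balA A0.
have AC0 : 0 < #|A :&: C|.
  by rewrite -double_gt0 -addnn {2}balA -setDE cardsID card_gt0.
have [a aAC] : exists a, a \in A :&: C by apply/set0Pn; rewrite -card_gt0.
have [b bAC] : exists b, b \in A :&: ~: C.
  by apply/set0Pn; rewrite -card_gt0 -balA.
have /subsetIP [sOaA sOaC] : orbit 'P S a \subset A :&: C.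
  by rewrite acts_sub_orbit ?actsI.
have /subsetIP [sObA sObC] : orbit 'P S b \subset A :&: ~: C.
  by rewrite acts_sub_orbit ?actsI.
have disbC : [disjoint orbit 'P S b & C] by rewrite disjoints_subset.
have disaC : [disjoint orbit 'P S a & ~: C] by rewrite disjoints_subset setCK.
set B := orbit 'P S a :|: orbit 'P S b.
have BC : B :&: C = orbit 'P S a.
  by rewrite setIUl (setIidPl sOaC) (disjoint_setI0 disbC) setU0.
have BCC : B :&: ~: C = orbit 'P S b.
  by rewrite setIUl (setIidPl sObC) (disjoint_setI0 disaC) set0U.
have sBA : B \subset A by rewrite subUset sOaA.
exists B.
  split=> //.
  - by apply/set0Pn; exists a; rewrite inE orbit_refl.
  - by rewrite actsU ?acts_orbit ?subsetT.
  - by rewrite /balanced !cards_setDI // BC BCC balA !card_orbit_semiregular.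
exists (orbit_swap a b); apply: orbit_pairing => [|s Ss].
  by case/setIP: aAC => _ aC; case/setIP: bAC => _ bC; apply: QC.
rewrite orbit_swap_act // orbit_swap_act_disjoint //.
by rewrite disjoint_sym (disjointWr sOaC disbC).
Qed.

Lemma equivariant_pairing_perm (phi : T -> T) :
  equivariant_pairing [set: T] phi ->
  exists p : {perm T},
    [/\ p * p = 1, forall x, Q x (p x) & forall s, s \in S -> p * s = s * p].
Proof.
move=> pairT; have pairx x := pairT x (in_setT x).
have phiK : involutive phi by move=> x; have [] := pairx x.
exists (perm (can_inj phiK)); split.
- by apply/permP => x; rewrite permM !permE phiK.
- by move=> x; rewrite permE; have [] := pairx x.
- move=> s Ss; apply/permP => x.
  by rewrite !permM !permE; have [_ _ _ ->] := pairx x.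
Qed.

End Pairing.

End Semiregular.

Lemma MsetE n : Mset n = ~: Wset n.
Proof. by apply/setP => i; rewrite !inE -leqNgt. Qed.

Lemma card_Wset n : #|Wset n| = n.
Proof.
have -> : Wset n = [set lshift n i | i : 'I_n].
  apply/setP => x; rewrite inE; apply/idP/imsetP => [xn | [i _ ->]].
    by exists (Ordinal xn) => //; apply: val_inj.
  by rewrite /= ltn_ord.
by rewrite card_imset ?card_ord //; apply: lshift_inj.
Qed.

Lemma card_setC_Wset n : #|~: Wset n| = n.
Proof. by apply/eqP; rewrite -(eqn_add2l n) -{1}(card_Wset n) cardsC card_ord. Qed.

Lemma Gstar_memW n (s : {perm 'I_(n + n)}) x : s \in Gstar n ->
  (s x \in Wset n) = (s \notin 'N(Wset n | 'P)) (+) (x \in Wset n).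
Proof.
rewrite inE MsetE => /eqP sWC.
have memsW y : (s y \in s @: Wset n) = (y \in Wset n).
  by rewrite mem_imset //; apply: perm_inj.
have /set2P [] : s @: Wset n \in [set Wset n; ~: Wset n] by rewrite -sWC set21.
  move=> sW; have sN : s \in 'N(Wset n | 'P).
    by apply/astabsP => y; rewrite /= -{1}sW memsW.
  by rewrite sN -{1}sW memsW.
move=> sW; have sWn : swaps_sides s (Wset n).
  by move=> y; rewrite -[y \in Wset n]memsW sW in_setC negbK.
suff -> : s \notin 'N(Wset n | 'P) by rewrite sWn.
by apply/negP => /astabsP sN; move: (sWn x); rewrite sN; case: (_ \in _).
Qed.

Lemma Gstar_opposite_sides n (s : {perm 'I_(n + n)}) :
  s \in Gstar n -> {homo s : x y / opposite_sides (Wset n) x y}.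
Proof.
by move=> Gs x y; rewrite /opposite_sides /= !(Gstar_memW _ Gs) (inj_eq (@addbI _)).
Qed.

Lemma swaps_Gstar n (p : {perm 'I_(n + n)}) :
  (0 < n)%N -> swaps_sides p (Wset n) -> p \in Gstar n :\: Gfix n.
Proof.
move=> n0 pW.
have pCW : p @: (~: Wset n) = Wset n.
  by rewrite imset_swaps ?setCK // => x; rewrite !in_setC pW.
have WneC : ~: Wset n != Wset n.
  apply/eqP => /setP /(_ (lshift n (Ordinal n0))).
  by rewrite !inE /= n0.
by rewrite !inE MsetE (imset_swaps pW) pCW setUC eqxx (negbTE WneC).
Qed.

Lemma Gstar_pairing n (S : {group {perm 'I_(n + n)}}) :
  odd n -> S \subset Gstar n -> semiregular S ->
  exists phi, equivariant_pairing S (opposite_sides (Wset n)) [set: _] phi.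
Proof.
move=> oddn SGstar semiregS.
have Q_act := fun s Ss => Gstar_opposite_sides (subsetP SGstar s Ss).
have Q_sym := @opposite_sides_sym _ (Wset n).
have [actW | /subsetPn [t St tNW]] := boolP [acts S, on Wset n | 'P].
  apply: (balanced_pairing semiregS Q_sym Q_act actW).
    by rewrite card_Wset card_setC_Wset.
  by move=> x y xW; rewrite inE /opposite_sides /= xW => ->.
have tW : swaps_sides t (Wset n).
  by move=> x; rewrite (Gstar_memW _ (subsetP SGstar t St)) tNW.
have oddW : odd #|Wset n| by rewrite card_Wset.
have [g Sg [gg1 gW]] := semiregular_swaps_involution semiregS oddW St tW.
apply: (involution_pairing semiregS Q_sym Q_act Sg gg1).
exact/opposite_sidesP.
Qed.

Theorem theorem11 (n : nat) (S : {group {perm 'I_(n + n)}}) :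
  (2 <= n)%N -> odd n ->
  S \subset Gstar n -> semiregular S ->
  exists phi : {perm 'I_(n + n)},
    [/\ phi \in Gstar n :\: Gfix n, #[phi] = 2%N &
        forall s, s \in S -> phi * s = s * phi].
Proof.
move=> _ oddn SGstar semiregS.
have [phi pair_phi] := Gstar_pairing oddn SGstar semiregS.
have [p [pp1 /opposite_sidesP pW pS]] := equivariant_pairing_perm pair_phi.
have n0 := odd_gt0 oddn.
exists p; split=> //; first exact: swaps_Gstar.
exact: order_swaps_sides (lshift n (Ordinal n0)) pp1 pW.
Qed.
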